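(* $\mathfrak{b}\leq\mathfrak{a}(\mathcal{BI})$.
   Context: $\mathcal{F}in\times\mathcal{F}in$ is the ideal on $\omega\times\omega$ consisting of those $A$ such that for all but finitely many $n\in\omega$ the set $\{m:(n,m)\in A\}$ is finite. The Boring ideal $\mathcal{BI}$ is the ideal on $\omega^{3}$ consisting of those $A\subseteq\omega^{3}$ such that for every $n\in\omega$ the set $\{(j,k):(n,j,k)\in A\}$ belongs to $\mathcal{F}in\times\mathcal{F}in$, and for all but finitely many $n\in\omega$ the set $A\cap(\{n\}\times\omega^{2})$ is finite. For an ideal $\mathcal{J}$ on a countable set, $\mathfrak{a}(\mathcal{J})$ is the smallest size of an uncountable family $\mathcal{A}$ of $\mathcal{J}$-positive sets (sets not in $\mathcal{J}$) which is maximal with respect to the property that $A\cap B\in\mathcal{J}$ for all distinct $A,B\in\mathcal{A}$. $\mathfrak{b}$ is the bounding number. *)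

From Stdlib Require Import Arith.

Definition fin_nat (A : nat -> Prop) : Prop :=
  exists N, forall m, A m -> m < N.

Definition fin_nat2 (A : nat * nat -> Prop) : Prop :=
  exists N, forall j k, A (j, k) -> j < N /\ k < N.

Definition FinxFin (A : nat * nat -> Prop) : Prop :=
  exists N, forall n, N <= n -> fin_nat (fun m => A (n, m)).

Definition BI (A : nat * nat * nat -> Prop) : Prop :=
  (forall n, FinxFin (fun p => A (n, fst p, snd p))) /\
  (exists N, forall n, N <= n -> fin_nat2 (fun p => A (n, fst p, snd p))).

Definition setI {T : Type} (A B : T -> Prop) : T -> Prop := fun x => A x /\ B x.

Definition countable_family {T : Type} (F : (T -> Prop) -> Prop) : Prop :=
  exists g : (T -> Prop) -> nat,
    forall A B, F A -> F B -> g A = g B -> A = B.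

Definition uncountable_family {T : Type} (F : (T -> Prop) -> Prop) : Prop :=
  ~ countable_family F.

Definition J_MAD {T : Type} (J : (T -> Prop) -> Prop) (F : (T -> Prop) -> Prop) : Prop :=
  (forall A, F A -> ~ J A) /\
  (forall A B, F A -> F B -> A <> B -> J (setI A B)) /\
  (forall B, ~ J B -> (forall A, F A -> J (setI A B)) -> F B).

Definition eventually_le (g h : nat -> nat) : Prop :=
  exists N, forall n, N <= n -> g n <= h n.

(* Fix distinct a_0, a_1, ... in the MAD family F. For A in F all but at most
   one of the sets A ∩ a_i are in BI, as witnessed by a modulus v_i; let g_A(m)
   bound v_i(n, j) for i, n, j <= m. If some h eventually dominated every g_A,
   each BI-positive a_i would contain a piece Q_i in BI placed beyond h, so that
   it misses A ∩ a_i whenever the modulus of A ∩ a_i is below h, yet positive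
   beyond i, so that no modulus that is small below i covers it. The union B of
   the Q_i is then BI-positive, since every modulus of B is small below some i,
   and BI-almost disjoint from every A in F, since A meets only finitely many
   Q_i. Maximality puts B in F, and then B = B ∩ B is in BI. *)

From Stdlib Require Import Arith Lia List Classical ClassicalEpsilon.

Notation point := (nat * nat * nat)%type.

Definition slice (X : point -> Prop) (n : nat) : nat * nat -> Prop :=
  fun p => X (n, fst p, snd p).

Lemma fin_nat_mono (P Q : nat -> Prop) :
  (forall m, P m -> Q m) -> fin_nat Q -> fin_nat P.
Proof. intros HPQ [N HN]. exists N. intros m Hm. apply HN, HPQ, Hm. Qed.

Lemma fin_nat2_mono (P Q : nat * nat -> Prop) :
  (forall p, P p -> Q p) -> fin_nat2 Q -> fin_nat2 P.
Proof. intros HPQ [N HN]. exists N. intros j k Hjk. apply HN, HPQ, Hjk. Qed.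

Lemma FinxFin_mono (P Q : nat * nat -> Prop) :
  (forall p, P p -> Q p) -> FinxFin Q -> FinxFin P.
Proof.
  intros HPQ [N HN]. exists N. intros n Hn.
  apply (fin_nat_mono _ (fun m => Q (n, m))); [intro m; apply HPQ | apply HN, Hn].
Qed.

Lemma BI_mono (X Y : point -> Prop) : (forall x, X x -> Y x) -> BI Y -> BI X.
Proof.
  intros HXY [Hslices [N Hfar]]. split.
  - intro n. apply (FinxFin_mono _ (slice Y n)); [intro p; apply HXY | apply Hslices].
  - exists N. intros n Hn.
    apply (fin_nat2_mono _ (slice Y n)); [intro p; apply HXY | apply Hfar, Hn].
Qed.

Lemma fin_nat_union (P Q : nat -> Prop) :
  fin_nat P -> fin_nat Q -> fin_nat (fun m => P m \/ Q m).
Proof.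
  intros [N1 H1] [N2 H2]. exists (N1 + N2).
  intros m [Hm|Hm]; [apply H1 in Hm | apply H2 in Hm]; lia.
Qed.

Lemma fin_nat2_union (P Q : nat * nat -> Prop) :
  fin_nat2 P -> fin_nat2 Q -> fin_nat2 (fun p => P p \/ Q p).
Proof.
  intros [N1 H1] [N2 H2]. exists (N1 + N2).
  intros j k [Hjk|Hjk]; [apply H1 in Hjk | apply H2 in Hjk]; lia.
Qed.

Lemma FinxFin_union (P Q : nat * nat -> Prop) :
  FinxFin P -> FinxFin Q -> FinxFin (fun p => P p \/ Q p).
Proof.
  intros [N1 H1] [N2 H2]. exists (N1 + N2). intros n Hn.
  apply (fin_nat_union (fun m => P (n, m)) (fun m => Q (n, m)));
    [apply H1 | apply H2]; lia.
Qed.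

Lemma BI_union (X Y : point -> Prop) : BI X -> BI Y -> BI (fun x => X x \/ Y x).
Proof.
  intros [HX [NX HXfar]] [HY [NY HYfar]]. split.
  - intro n. apply (FinxFin_union (slice X n) (slice Y n)); [apply HX | apply HY].
  - exists (NX + NY). intros n Hn.
    apply (fin_nat2_union (slice X n) (slice Y n)); [apply HXfar | apply HYfar]; lia.
Qed.

Lemma BI_empty : BI (fun _ => False).
Proof.
  split.
  - intro n. exists 0. intros m _. exists 0. intros k [].
  - exists 0. intros n _. exists 0. intros j k [].
Qed.

Lemma BI_bounded_union (Q : nat -> point -> Prop) (K : nat) :
  (forall i, i < K -> BI (Q i)) -> BI (fun x => exists i, i < K /\ Q i x).
Proof.
  induction K as [|K IHK]; intro HQ.
  - apply (BI_mono _ (fun _ => False)); [intros x [i [Hi _]]; lia | exact BI_empty].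
  - apply (BI_mono _ (fun x => (exists i, i < K /\ Q i x) \/ Q K x)).
    + intros x [i [Hi HQi]]. destruct (Nat.eq_dec i K) as [->|HiK]; [right | left]; auto.
      exists i. split; [lia | exact HQi].
    + apply BI_union; [apply IHK; intros i Hi |]; apply HQ; lia.
Qed.

Lemma BI_in_slice (Y : point -> Prop) (c : nat) :
  FinxFin (slice Y c) -> BI (fun x => fst (fst x) = c /\ Y x).
Proof.
  intro Hc. split.
  - intro n. destruct (Nat.eq_dec n c) as [->|Hnc].
    + apply (FinxFin_mono _ _ (fun p Hp => proj2 Hp) Hc).
    + exists 0. intros m _. exists 0. intros k [Hn _]. contradiction.
  - exists (S c). intros n Hn. exists 0. intros j k [Hnc _]. simpl in Hnc. lia.
Qed.

(* v packs all witnesses of [BI X]: v 0 0 is the index beyond which slices are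
   finite, v n 0 both bounds such a slice and is the row beyond which the fibres
   of the n-th slice are finite, and v n j bounds the fibre at (n, j). *)
Definition BI_modulus (X : point -> Prop) (v : nat -> nat -> nat) : Prop :=
  (forall n j k, X (n, j, k) -> v n 0 <= j -> k < v n j) /\
  (forall n j k, X (n, j, k) -> v 0 0 <= n -> j < v n 0 /\ k < v n 0).

Lemma BI_modulus_mono (X Y : point -> Prop) (v : nat -> nat -> nat) :
  (forall x, X x -> Y x) -> BI_modulus Y v -> BI_modulus X v.
Proof.
  intros HXY [Hfib Hfar]. split; intros n j k Hx; [apply Hfib | apply Hfar]; auto.
Qed.

Lemma BI_has_modulus (X : point -> Prop) : BI X -> exists v, BI_modulus X v.
Proof.
  intros [Hslices [N Hfar]].
  destruct (choice (fun n M => N <= n -> forall j k, X (n, j, k) -> j < M /\ k < M))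
    as [M HM].
  { intro n. destruct (le_lt_dec N n) as [Hn|Hn].
    - destruct (Hfar n Hn) as [M HM]. exists M. auto.
    - exists 0. lia. }
  destruct (choice (fun n T => forall j, T <= j -> fin_nat (fun k => X (n, j, k))))
    as [T HT].
  { exact Hslices. }
  destruct (choice (fun nj b => T (fst nj) <= snd nj -> forall k, X (fst nj, snd nj, k) -> k < b))
    as [b Hb].
  { intros [n j]. destruct (le_lt_dec (T n) j) as [Hj|Hj].
    - destruct (HT n j Hj) as [b Hb]. exists b. auto.
    - exists 0. simpl. lia. }
  exists (fun n j => N + M n + T n + b (n, j)). split.
  - intros n j k Hx Hj. assert (k < b (n, j)) by (apply (Hb (n, j)); simpl; [lia | exact Hx]).
    lia.
  - intros n j k Hx Hn. destruct (HM n ltac:(lia) j k Hx). lia.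
Qed.

Definition some_modulus (X : point -> Prop) : nat -> nat -> nat :=
  epsilon (inhabits (fun _ _ => 0)) (BI_modulus X).

Lemma some_modulus_spec (X : point -> Prop) : BI X -> BI_modulus X (some_modulus X).
Proof. intro HX. exact (epsilon_spec _ _ (BI_has_modulus X HX)). Qed.

Definition bound_upto (f : nat -> nat) (m : nat) : nat := list_max (map f (seq 0 (S m))).

Lemma le_bound_upto (f : nat -> nat) (m k : nat) : k <= m -> f k <= bound_upto f m.
Proof.
  intro Hk. pose proof (proj1 (list_max_le (map f (seq 0 (S m))) _) (le_n _)) as Hall.
  rewrite Forall_forall in Hall. apply Hall, in_map, in_seq. lia.
Qed.

Section Pieces.

Variables (h : nat -> nat) (i : nat).

Definition misses_dominated (Q : point -> Prop) : Prop :=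
  forall X v, BI_modulus X v -> (forall n j, v n j <= h (max i (max n j))) ->
  forall x, X x -> Q x -> False.

Definition escapes_small_moduli (Q : point -> Prop) : Prop :=
  forall v, (forall c, c <= v 0 0 -> v c 0 <= i) -> ~ BI_modulus Q v.

Definition piece (Y Q : point -> Prop) : Prop :=
  (forall x, Q x -> Y x) /\ BI Q /\ misses_dominated Q /\ escapes_small_moduli Q.

Lemma piece_in_row (Y : point -> Prop) (c : nat) :
  ~ FinxFin (slice Y c) -> exists Q, piece Y Q.
Proof.
  intro Hc.
  assert (Hrow : exists j0, i + h (max i (max c 0)) <= j0 /\ ~ fin_nat (fun k => Y (c, j0, k))).
  { apply NNPP. intro Hnone. apply Hc. exists (i + h (max i (max c 0))). intros j Hj.
    apply NNPP. intro Hinf. apply Hnone. exists j. auto. }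
  destruct Hrow as [j0 [Hj0 Hinf]].
  pose (Q := fun '(n, j, k) => n = c /\ j = j0 /\ Y (n, j, k) /\ h (max i (max n j)) <= k).
  exists Q. split; [|split; [|split]].
  - intros [[n j] k] [_ [_ [Hy _]]]. exact Hy.
  - apply (BI_mono _ (fun x => fst (fst x) = c /\ snd (fst x) = j0)).
    + intros [[n j] k] [-> [-> _]]. auto.
    + apply BI_in_slice. exists (S j0). intros j Hj. exists 0. intros k Hk. unfold slice in Hk. simpl in Hk. lia.
  - intros X v [Hfib _] Hdom [[n j] k] Hx [-> [-> [_ Hk]]].
    pose proof (Hdom c 0). pose proof (Hdom c j0).
    assert (k < v c j0) by (apply Hfib; [exact Hx | lia]). lia.
  - intros v Hsmall [Hfib Hfar]. apply Hinf.
    exists (h (max i (max c j0)) + v c j0 + v c 0). intros k Hy.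
    destruct (le_lt_dec (h (max i (max c j0))) k) as [Hk|Hk]; [|lia].
    assert (HQ : Q (c, j0, k)) by (simpl; auto).
    destruct (le_lt_dec (v 0 0) c) as [Hc0|Hc0].
    + destruct (Hfar c j0 k HQ Hc0). lia.
    + assert (v c 0 <= i) by (apply Hsmall; lia).
      assert (k < v c j0) by (apply Hfib; [exact HQ | lia]). lia.
Qed.

Lemma piece_in_slice (Y : point -> Prop) :
  (forall c, FinxFin (slice Y c)) -> ~ BI Y -> exists Q, piece Y Q.
Proof.
  intros Hslices HY.
  assert (Hslice : exists n0, i + h (max i (max 0 0)) <= n0 /\ ~ fin_nat2 (slice Y n0)).
  { apply NNPP. intro Hnone. apply HY. split; [exact Hslices|].
    exists (i + h (max i (max 0 0))). intros n Hn.
    apply NNPP. intro Hinf. apply Hnone. exists n. auto. }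
  destruct Hslice as [n0 [Hn0 Hinf]].
  pose (Q := fun '(n, j, k) =>
    n = n0 /\ Y (n, j, k) /\ ~ (j < h (max i (max n 0)) /\ k < h (max i (max n 0)))).
  exists Q. split; [|split; [|split]].
  - intros [[n j] k] [_ [Hy _]]. exact Hy.
  - apply (BI_mono _ (fun x => fst (fst x) = n0 /\ Y x)).
    + intros [[n j] k] [-> [Hy _]]. auto.
    + apply BI_in_slice, Hslices.
  - intros X v [_ Hfar] Hdom [[n j] k] Hx [-> [_ Hbox]]. apply Hbox.
    pose proof (Hdom 0 0). pose proof (Hdom n0 0).
    destruct (Hfar n0 j k Hx) as [Hj Hk]; [lia|]. lia.
  - intros v Hsmall [_ Hfar]. apply Hinf.
    assert (v 0 0 <= i) by (apply Hsmall; lia).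
    exists (h (max i (max n0 0)) + v n0 0). intros j k Hy.
    destruct (classic (j < h (max i (max n0 0)) /\ k < h (max i (max n0 0)))) as [Hbox|Hbox];
      [lia|].
    assert (HQ : Q (n0, j, k)) by (simpl; auto).
    destruct (Hfar n0 j k HQ) as [Hj Hk]; lia.
Qed.

Lemma BI_positive_has_piece (Y : point -> Prop) : ~ BI Y -> exists Q, piece Y Q.
Proof.
  intro HY. destruct (classic (exists c, ~ FinxFin (slice Y c))) as [[c Hc]|Hall].
  - exact (piece_in_row Y c Hc).
  - apply piece_in_slice; [|exact HY]. intro c. apply NNPP. intro Hc. apply Hall. eauto.
Qed.

End Pieces.

Section UnionOfPieces.

Variables (h : nat -> nat) (Y Q : nat -> point -> Prop).
Hypothesis Q_piece : forall i, piece h i (Y i) (Q i).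

Lemma union_of_pieces_not_BI : ~ BI (fun x => exists i, Q i x).
Proof.
  intro HB. destruct (BI_has_modulus _ HB) as [v Hv].
  pose (i := bound_upto (fun c => v c 0) (v 0 0)).
  destruct (Q_piece i) as [_ [_ [_ Hesc]]].
  apply (Hesc v).
  - intros c Hc. apply (le_bound_upto (fun c => v c 0)), Hc.
  - apply (BI_modulus_mono _ _ v (fun x Hx => ex_intro _ i Hx) Hv).
Qed.

Lemma BI_meet_union_of_pieces (A : point -> Prop) (K : nat) :
  (forall i, K <= i -> exists v,
     BI_modulus (setI A (Y i)) v /\ forall n j, v n j <= h (max i (max n j))) ->
  BI (setI A (fun x => exists i, Q i x)).
Proof.
  intro Hdom. apply (BI_mono _ (fun x => exists i, i < K /\ Q i x)).
  - intros x [Hx [i HQi]]. exists i. split; [|exact HQi].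
    destruct (lt_dec i K) as [|HiK]; [assumption | exfalso].
    destruct (Q_piece i) as [HQY [_ [Hmiss _]]].
    destruct (Hdom i ltac:(lia)) as [v [Hv Hvh]].
    apply (Hmiss _ v Hv Hvh x); [split; [exact Hx | apply HQY, HQi] | exact HQi].
  - apply BI_bounded_union. intros i _. apply Q_piece.
Qed.

End UnionOfPieces.

Section DominatingFamily.

Variables (F : (point -> Prop) -> Prop) (a : nat -> point -> Prop).
Hypothesis F_MAD : J_MAD BI F.
Hypothesis a_in_F : forall i, F (a i).
Hypothesis a_inj : forall i k, a i = a k -> i = k.

Definition modulus_bound (A : point -> Prop) (m : nat) : nat :=
  bound_upto (fun i => bound_upto (fun n => bound_upto (some_modulus (setI A (a i)) n) m) m) m.

Lemma some_modulus_le_bound (A : point -> Prop) (i n j m : nat) :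
  i <= m -> n <= m -> j <= m -> some_modulus (setI A (a i)) n j <= modulus_bound A m.
Proof.
  intros Hi Hn Hj. unfold modulus_bound.
  eapply Nat.le_trans; [|apply (le_bound_upto _ m i Hi)]. cbv beta.
  eapply Nat.le_trans; [|apply (le_bound_upto _ m n Hn)]. cbv beta.
  apply (le_bound_upto _ m j Hj).
Qed.

Lemma dominated_bound_gives_moduli (A : point -> Prop) (h : nat -> nat) :
  F A -> eventually_le (modulus_bound A) h ->
  exists K, forall i, K <= i -> exists v,
    BI_modulus (setI A (a i)) v /\ forall n j, v n j <= h (max i (max n j)).
Proof.
  intros HA [K HK].
  assert (Hfar : exists M, forall i, M <= i -> A <> a i).
  { destruct (classic (exists k, A = a k)) as [[k ->]|Hnone].
    - exists (S k). intros i Hi E. apply a_inj in E. lia.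
    - exists 0. intros i _ E. apply Hnone. eauto. }
  destruct Hfar as [M HM].
  exists (K + M). intros i Hi. exists (some_modulus (setI A (a i))). split.
  - apply some_modulus_spec. destruct F_MAD as [_ [Had _]]. apply Had; auto. apply HM. lia.
  - intros n j. eapply Nat.le_trans; [apply (some_modulus_le_bound A i n j) | apply HK]; lia.
Qed.

Lemma modulus_bound_unbounded (h : nat -> nat) :
  exists A, F A /\ ~ eventually_le (modulus_bound A) h.
Proof.
  apply NNPP. intro Hdom.
  destruct F_MAD as [Fpos [_ Fmax]].
  destruct (choice (fun i Q => piece h i (a i) Q)
                   (fun i => BI_positive_has_piece h i (a i) (Fpos _ (a_in_F i))))
    as [Q HQ].
  pose (B := fun x => exists i, Q i x).
  assert (HB_AD : forall A, F A -> BI (setI A B)).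
  { intros A HA. destruct (dominated_bound_gives_moduli A h HA) as [K HK].
    - apply NNPP. intro Hn. apply Hdom. eauto.
    - exact (BI_meet_union_of_pieces h a Q HQ A K HK). }
  apply (union_of_pieces_not_BI h a Q HQ).
  apply (BI_mono _ (setI B B)); [intros x Hx; split; exact Hx |].
  apply HB_AD, Fmax; [exact (union_of_pieces_not_BI h a Q HQ) | exact HB_AD].
Qed.

End DominatingFamily.

Lemma uncountable_family_avoids_lists {T : Type} (F : (T -> Prop) -> Prop) :
  uncountable_family F -> forall l, exists A, F A /\ ~ In A l.
Proof.
  intros HU l. apply NNPP. intro Hnone. apply HU.
  assert (Hin : forall A, F A -> exists k, nth_error l k = Some A).
  { intros A HA. apply In_nth_error, NNPP. intro Hout. apply Hnone. eauto. }
  exists (fun A => epsilon (inhabits 0) (fun k => nth_error l k = Some A)).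
  intros A B HA HB Hidx.
  pose proof (epsilon_spec (inhabits 0) _ (Hin A HA)) as EA.
  pose proof (epsilon_spec (inhabits 0) _ (Hin B HB)) as EB.
  cbv beta in EA, EB. rewrite Hidx, EB in EA. congruence.
Qed.

Section FreshSequence.

Variables (T : Type) (next : list (T -> Prop) -> T -> Prop).

Fixpoint first_terms (n : nat) : list (T -> Prop) :=
  match n with
  | 0 => nil
  | S n => next (first_terms n) :: first_terms n
  end.

Lemma In_first_terms (k n : nat) : k < n -> In (next (first_terms k)) (first_terms n).
Proof.
  induction n as [|n IHn]; intro Hk; [lia|]. simpl.
  destruct (Nat.eq_dec k n) as [->|Hkn]; [left; reflexivity | right; apply IHn; lia].
Qed.

End FreshSequence.

Lemma uncountable_family_has_injective_seq {T : Type} (F : (T -> Prop) -> Prop) :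
  uncountable_family F ->
  exists a : nat -> T -> Prop, (forall i, F (a i)) /\ (forall i k, a i = a k -> i = k).
Proof.
  intro HU. destruct (choice _ (uncountable_family_avoids_lists F HU)) as [next Hnext].
  exists (fun n => next (first_terms T next n)). split; [intro i; apply Hnext |].
  intros i k E. destruct (lt_eq_lt_dec i k) as [[Hik|Hik]|Hki]; [exfalso | exact Hik | exfalso].
  - apply (proj2 (Hnext (first_terms T next k))). rewrite <- E. apply In_first_terms, Hik.
  - apply (proj2 (Hnext (first_terms T next i))). rewrite E. apply In_first_terms, Hki.
Qed.

Theorem mainTheorem2 :
  forall F : (nat * nat * nat -> Prop) -> Prop,
    J_MAD BI F -> uncountable_family F ->
    exists g : (nat * nat * nat -> Prop) -> (nat -> nat),
      forall h : nat -> nat, exists A, F A /\ ~ eventually_le (g A) h.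
Proof.
  intros F HMAD HU.
  destruct (uncountable_family_has_injective_seq F HU) as [a [Ha Hinj]].
  exists (modulus_bound a). intro h.
  exact (modulus_bound_unbounded F a HMAD Ha Hinj h).
Qed.
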